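(* Let $d\ge 3$. In every model of $\mathsf{SR}$, for any inertial observers $m$ and $k$, the worldview transformation $\mathsf{w}_{mk}$ is a Poincaré transformation of $Q^d$.
   Context: Language: two-sorted first-order language with sorts $B$ (bodies), $Q$ (quantities), unary $\mathsf{IOb}$ on $B$, binary $\mathsf{Ph}$ on $B$, operations $+,\cdot$ and relation $\le$ on $Q$, and $(d+2)$-ary $\mathsf{W}$ (first two arguments of sort $B$, rest of sort $Q$). $\mathsf{time}(\bar x,\bar y)=x_1-y_1$, $\mathsf{space}^2(\bar x,\bar y)=\sum_{i=2}^d(x_i-y_i)^2$. Write $\mathsf{ev}_m(\bar x)=\mathsf{ev}_k(\bar y)$ for $\forall b[\mathsf{W}(m,b,\bar x)\leftrightarrow\mathsf{W}(k,b,\bar y)]$. $\mathsf{SR}=\mathsf{SPR}^++\mathsf{AxLight}+\mathsf{AxOField}+\mathsf{AxEv}+\mathsf{AxSelf}+\mathsf{AxSymD}$, where: $\mathsf{SPR}^+$: for every formula $\varphi(h,\bar x)$ with at most one free variable $h$ of sort $B$, $\forall m k\bar x[\mathsf{IOb}(m)\land\mathsf{IOb}(k)\to(\varphi(m,\bar x)\leftrightarrow\varphi(k,\bar x))]$. $\mathsf{AxLight}$: $\exists m\,c\,[\mathsf{IOb}(m)\land c>0\land\forall\bar x\bar y\,(\exists p b[\mathsf{Ph}(p,b)\land\mathsf{W}(m,p,\bar x)\land\mathsf{W}(m,p,\bar y)]\leftrightarrow \mathsf{space}^2(\bar x,\bar y)=c^2\mathsf{time}(\bar x,\bar y)^2)]$.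 $\mathsf{AxOField}$: $\langle Q,+,\cdot,\le\rangle$ is an ordered field. $\mathsf{AxEv}$: $\mathsf{IOb}(m)\land\mathsf{IOb}(k)\to\exists\bar y\,\mathsf{ev}_m(\bar x)=\mathsf{ev}_k(\bar y)$ (for all $m,k,\bar x$). $\mathsf{AxSelf}$: $\mathsf{IOb}(m)\to\forall\bar x[\mathsf{W}(m,m,\bar x)\leftrightarrow x_2=\dots=x_d=0]$. $\mathsf{AxSymD}$: (i) if $\mathsf{IOb}(m),\mathsf{IOb}(k)$, $x_1=y_1$, $x'_1=y'_1$, $\mathsf{ev}_m(\bar x)=\mathsf{ev}_k(\bar x')$ and $\mathsf{ev}_m(\bar y)=\mathsf{ev}_k(\bar y')$, then $\mathsf{space}^2(\bar x,\bar y)=\mathsf{space}^2(\bar x',\bar y')$; (ii) $\mathsf{IOb}(m)\to\exists pb[\mathsf{Ph}(p,b)\land\mathsf{W}(m,p,0,\dots,0)\land\mathsf{W}(m,p,1,1,0,\dots,0)]$. Worldview transformation: $\mathsf{w}_{mk}=\{\langle\bar x,\bar y\rangle\in Q^d\times Q^d:\forall b[\mathsf{W}(m,b,\bar x)\leftrightarrow\mathsf{W}(k,b,\bar y)]\}$. A Poincaré transformation is an affine bijection $P:Q^d\to Q^d$ such that $\mathsf{time}(\bar x,\bar y)^2-\mathsf{space}^2(\bar x,\bar y)=\mathsf{time}(P\bar x,P\bar y)^2-\mathsf{space}^2(P\bar x,P\bar y)$ for all $\bar x,\bar y$. *)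

From HB Require Import structures.
From mathcomp Require Import all_boot all_order all_algebra.
Set Implicit Arguments. Unset Strict Implicit. Unset Printing Implicit Defensive.
Import Order.TTheory GRing.Theory Num.Theory.
Local Open Scope ring_scope.

(* ---------- Coordinates: Q^d is represented by 'rV[Q]_d, coordinate
   x_1 is the column with index 0, x_2..x_d the columns with index >= 1. *)
Section Geometry.
Variables (Q : realFieldType) (d : nat).

Definition time (x y : 'rV[Q]_d) : Q :=
  \sum_(i < d | (i : nat) == 0%N) (x 0 i - y 0 i).

Definition space2 (x y : 'rV[Q]_d) : Q :=
  \sum_(i < d | (0 < (i : nat))%N) (x 0 i - y 0 i) ^+ 2.

Definition pt11 : 'rV[Q]_d := \row_(i < d) (if ((i : nat) < 2)%N then 1 else 0).

Definition affine_map (P : 'rV[Q]_d -> 'rV[Q]_d) : Prop :=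
  exists (A : 'M[Q]_d) (b : 'rV[Q]_d), forall x, P x = x *m A + b.

Definition poincare (P : 'rV[Q]_d -> 'rV[Q]_d) : Prop :=
  [/\ affine_map P, bijective P &
      forall x y, time x y ^+ 2 - space2 x y = time (P x) (P y) ^+ 2 - space2 (P x) (P y)].

End Geometry.

(* ---------- First-order syntax of the two-sorted language (deep embedding),
   needed for the axiom schema SPR^+.  Variables are named by nat. *)
Inductive qterm : Type :=
  | QV of nat
  | QAdd of qterm & qterm
  | QMul of qterm & qterm.

Inductive form (d : nat) : Type :=
  | FIOb of nat
  | FPh of nat & nat
  | FW of nat & nat & ('I_d -> qterm)
  | FLe of qterm & qterm
  | FEqQ of qterm & qterm
  | FEqB of nat & nat
  | FFalse
  | FNot of form d
  | FAnd of form d & form d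
  | FOr of form d & form d
  | FImp of form d & form d
  | FAllB of nat & form d
  | FExB of nat & form d
  | FAllQ of nat & form d
  | FExQ of nat & form d.

Arguments FFalse {d}.

Definition upd (T : Type) (e : nat -> T) (n : nat) (v : T) : nat -> T :=
  fun j => if j == n then v else e j.

Fixpoint qeval (Q : realFieldType) (eQ : nat -> Q) (t : qterm) : Q :=
  match t with
  | QV n => eQ n
  | QAdd t1 t2 => qeval eQ t1 + qeval eQ t2
  | QMul t1 t2 => qeval eQ t1 * qeval eQ t2
  end.

Fixpoint fvB (d : nat) (f : form d) : seq nat :=
  match f with
  | FIOb n => [:: n]
  | FPh n1 n2 => [:: n1; n2]
  | FW n1 n2 _ => [:: n1; n2]
  | FLe _ _ | FEqQ _ _ | FFalse => [::]
  | FEqB n1 n2 => [:: n1; n2]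
  | FNot g => fvB g
  | FAnd g h | FOr g h | FImp g h => fvB g ++ fvB h
  | FAllB n g | FExB n g => [seq j <- fvB g | j != n]
  | FAllQ _ g | FExQ _ g => fvB g
  end.

Section Semantics.
Variables (Q : realFieldType) (d : nat) (B : Type)
  (IOb : B -> Prop) (Ph : B -> B -> Prop) (W : B -> B -> 'rV[Q]_d -> Prop).

Fixpoint holds (eB : nat -> B) (eQ : nat -> Q) (f : form d) : Prop :=
  match f with
  | FIOb n => IOb (eB n)
  | FPh n1 n2 => Ph (eB n1) (eB n2)
  | FW n1 n2 ts => W (eB n1) (eB n2) (\row_i qeval eQ (ts i))
  | FLe t1 t2 => qeval eQ t1 <= qeval eQ t2
  | FEqQ t1 t2 => qeval eQ t1 = qeval eQ t2
  | FEqB n1 n2 => eB n1 = eB n2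
  | FFalse => False
  | FNot g => ~ holds eB eQ g
  | FAnd g h => holds eB eQ g /\ holds eB eQ h
  | FOr g h => holds eB eQ g \/ holds eB eQ h
  | FImp g h => holds eB eQ g -> holds eB eQ h
  | FAllB n g => forall b : B, holds (upd eB n b) eQ g
  | FExB n g => exists b : B, holds (upd eB n b) eQ g
  | FAllQ n g => forall q : Q, holds eB (upd eQ n q) g
  | FExQ n g => exists q : Q, holds eB (upd eQ n q) g
  end.

Definition ev_eq (m : B) (x : 'rV[Q]_d) (k : B) (y : 'rV[Q]_d) : Prop :=
  forall b, W m b x <-> W k b y.

Definition wview (m k : B) (x y : 'rV[Q]_d) : Prop := ev_eq m x k y.

(* SPR^+ : for every formula phi whose only free body variable is (at most)
   variable 0 (= h), and every valuation of the quantity variables x-bar. *)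
Definition SPRplus : Prop :=
  forall phi : form d, all (fun j => j == 0%N) (fvB phi) ->
  forall (eB : nat -> B) (eQ : nat -> Q) (m k : B), IOb m -> IOb k ->
    (holds (upd eB 0 m) eQ phi <-> holds (upd eB 0 k) eQ phi).

Definition AxLight : Prop :=
  exists (m : B) (c : Q), [/\ IOb m, 0 < c &
    forall x y : 'rV[Q]_d,
      (exists p b, [/\ Ph p b, W m p x & W m p y]) <->
      space2 x y = c ^+ 2 * time x y ^+ 2].

Definition AxEv : Prop :=
  forall (m k : B) (x : 'rV[Q]_d), IOb m -> IOb k -> exists y, ev_eq m x k y.

Definition AxSelf : Prop :=
  forall m : B, IOb m ->
    forall x : 'rV[Q]_d, W m m x <-> (forall i : 'I_d, (0 < (i : nat))%N -> x 0 i = 0).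

Definition AxSymD : Prop :=
  (forall (m k : B) (x y x' y' : 'rV[Q]_d), IOb m -> IOb k ->
     time x y = 0 -> time x' y' = 0 -> ev_eq m x k x' -> ev_eq m y k y' ->
     space2 x y = space2 x' y')
  /\
  (forall m : B, IOb m -> exists p b, [/\ Ph p b, W m p 0 & W m p (pt11 Q d)]).

(* AxOField is built in: Q is a realFieldType, i.e. an ordered field. *)
Definition SR : Prop := [/\ SPRplus, AxLight, AxEv, AxSelf & AxSymD].

End Semantics.

(* Proof.  (1) SPR+ applied to the formula "h sees photons exactly where
   space2 = time^2", together with AxLight and AxSymD(ii) (which fix the speed
   of light to 1), shows that every inertial observer sees photons exactly on
   the Minkowski light cone.  (2) Since light cones separate events, AxEv makes
   w_mk the graph of a bijection f of Q^d that preserves lightlike separation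
   both ways, and AxSymD(i) says f preserves the spatial distance of pairs that
   are simultaneous before and after.  (3) The geometric core is an
   Alexandrov-Zeeman type theorem for d >= 3: light lines and their orthogonal
   hyperplanes are definable from the light cone, which yields a parallelogram
   rule for lightlike sides; as lightlike vectors span, f - f 0 is additive,
   then semilinear for an automorphism mu of Q along every light line; the
   simultaneity condition forces mu = id and the preservation of the Minkowski
   form, i.e. f is Poincare. *)

From Pilot Require Import Defs.
From HB Require Import structures.
From mathcomp Require Import all_boot all_order all_algebra.
From mathcomp Require Import ring lra.
From Stdlib Require Import IndefiniteDescription FunctionalExtensionality.
Import Order.TTheory GRing.Theory Num.Theory.
Local Open Scope ring_scope.
Set Implicit Arguments. Unset Strict Implicit. Unset Printing Implicit Defensive.

Ltac row_ring := apply/rowP => ?; rewrite !mxE; ring.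
Ltac row_field := apply/rowP => ?; rewrite !mxE; field.

Lemma inj_surj_bijective (T : Type) (f : T -> T) :
  injective f -> (forall y, exists x, f x = y) -> bijective f.
Proof.
move=> f_inj f_surj; have hinv (t : T) : {s : T | f s = t}.
  exact: constructive_indefinite_description (f_surj t).
exists (fun t => sval (hinv t)) => [s|t]; last exact: (svalP (hinv t)).
by apply: f_inj; rewrite (svalP (hinv (f s))).
Qed.

Section MinkowskiForm.
Variables (Q : realFieldType) (d : nat).
Implicit Types (a b c w x y z u n : 'rV[Q]_d).

Definition msign (i : 'I_d) : Q := if (i : nat) == 0%N then 1 else -1.

Definition mdot x y : Q := \sum_i msign i * (x 0 i * y 0 i).
Definition mnorm x : Q := mdot x x.

Definition lightlike x y : Prop := mnorm (x - y) = 0.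

Definition on_line x n z : Prop := exists t : Q, z = x + t *: n.

Lemma two_neq0 : (2 : Q) != 0.
Proof. by rewrite pnatr_eq0. Qed.

Lemma mdotC x y : mdot x y = mdot y x.
Proof. by apply: eq_bigr => i _; rewrite [x 0 i * _]mulrC. Qed.

Lemma mdotDl x y z : mdot (x + y) z = mdot x z + mdot y z.
Proof. rewrite /mdot -big_split /=; apply: eq_bigr => i _; rewrite !mxE; ring. Qed.

Lemma mdotZl (c : Q) x z : mdot (c *: x) z = c * mdot x z.
Proof. rewrite /mdot mulr_sumr; apply: eq_bigr => i _; rewrite !mxE; ring. Qed.

Lemma mdotBl x y z : mdot (x - y) z = mdot x z - mdot y z.
Proof. by rewrite mdotDl -scaleN1r mdotZl mulN1r. Qed.

Lemma mdotDr x y z : mdot z (x + y) = mdot z x + mdot z y.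
Proof. by rewrite mdotC mdotDl !(mdotC z). Qed.

Lemma mdotZr (c : Q) x z : mdot z (c *: x) = c * mdot z x.
Proof. by rewrite mdotC mdotZl mdotC. Qed.

Lemma mdotBr x y z : mdot z (x - y) = mdot z x - mdot z y.
Proof. by rewrite mdotC mdotBl !(mdotC z). Qed.

Lemma mdot0l z : mdot 0 z = 0.
Proof. by rewrite -(scale0r (0 : 'rV[Q]_d)) mdotZl mul0r. Qed.

Lemma mdot0r z : mdot z 0 = 0.
Proof. by rewrite mdotC mdot0l. Qed.

Lemma scale_cancel (k1 k2 : Q) w : k1 *: w = k2 *: w -> w != 0 -> k1 = k2.
Proof.
move=> h nw; have : (k1 - k2) *: w = 0 by rewrite scalerBl h subrr.
by move/eqP; rewrite scaler_eq0 (negbTE nw) orbF subr_eq0 => /eqP.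
Qed.

Lemma mdot_neq0_nz x y : mdot x y != 0 -> x != 0 /\ y != 0.
Proof.
by move=> hxy; split; apply: contraNneq hxy => ->; rewrite ?mdot0l ?mdot0r.
Qed.

Lemma mnormD x y : mnorm (x + y) = mnorm x + 2 * mdot x y + mnorm y.
Proof. rewrite /mnorm !mdotDl !mdotDr (mdotC y x); ring. Qed.

Lemma mnormB x y : mnorm (x - y) = mnorm x - 2 * mdot x y + mnorm y.
Proof. rewrite /mnorm !mdotBl !mdotBr (mdotC y x); ring. Qed.

Lemma mnormZ (c : Q) x : mnorm (c *: x) = c ^+ 2 * mnorm x.
Proof. rewrite /mnorm mdotZl mdotZr; ring. Qed.

Lemma mnormN x : mnorm (- x) = mnorm x.
Proof. by rewrite -[- x]scaleN1r mnormZ sqrrN expr1n mul1r. Qed.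

Lemma mnorm0 : mnorm 0 = 0.
Proof. by rewrite /mnorm mdot0l. Qed.

Lemma mnorm_sum3 x y z :
  mnorm (x + y + z) = mnorm x + mnorm y + mnorm z + 2 * (mdot x y + mdot x z + mdot y z).
Proof. rewrite !mnormD mdotDl; ring. Qed.

Lemma lightlikeC x y : lightlike x y <-> lightlike y x.
Proof. by rewrite /lightlike -opprB mnormN. Qed.

Lemma lightlike_refl x : lightlike x x.
Proof. by rewrite /lightlike subrr mnorm0. Qed.

Lemma lightlike_line z x n t : mnorm n = 0 ->
  (lightlike z (x + t *: n) <-> mnorm (z - x) - 2 * t * mdot (z - x) n = 0).
Proof.
move=> hn; rewrite /lightlike (_ : z - (x + t *: n) = (z - x) - t *: n); last by row_ring.
by rewrite (mnormB (z - x)) mnormZ mdotZr hn mulr0 addr0 mulrA.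
Qed.

(* Three pairwise non-orthogonal lightlike vectors are linearly independent
   (we only need the first two coefficients to vanish). *)
Lemma null_triple_indep a b c (x y z : Q) :
  mnorm a = 0 -> mnorm b = 0 -> mnorm c = 0 ->
  mdot a b != 0 -> mdot a c != 0 -> mdot b c != 0 ->
  x *: a + y *: b + z *: c = 0 -> x = 0 /\ y = 0.
Proof.
move=> ha hb hc hab hac hbc h.
have e1 := congr1 (mdot^~ a) h; have e2 := congr1 (mdot^~ b) h.
have e3 := congr1 (mdot^~ c) h.
move: e1 e2 e3; rewrite /= !mdotDl !mdotZl !mdot0l.
rewrite (ha : mdot a a = 0) (hb : mdot b b = 0) (hc : mdot c c = 0).
rewrite (mdotC b a) (mdotC c a) (mdotC c b) => e1 e2 e3.
have hz : z * (2 * mdot a c * mdot b c) = 0.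
  have -> : z * (2 * mdot a c * mdot b c) =
    mdot b c * (x * 0 + y * mdot a b + z * mdot a c)
    + mdot a c * (x * mdot a b + y * 0 + z * mdot b c)
    - mdot a b * (x * mdot a c + y * mdot b c + z * 0) by ring.
  by rewrite e1 e2 e3; ring.
move/eqP: hz; rewrite !mulf_eq0 (negbTE hac) (negbTE hbc) (negbTE two_neq0) !orbF.
move=> /eqP hz; subst z.
have hy : y * mdot a b = 0 by rewrite -e1; ring.
have hx : x * mdot a b = 0 by rewrite -e2; ring.
move/eqP: hx; move/eqP: hy; rewrite !mulf_eq0 (negbTE hab) !orbF.
by move=> /eqP -> /eqP ->.
Qed.

Definition unitv (j : 'I_d) : 'rV[Q]_d := delta_mx 0 j.

Lemma mdot_unit x j : mdot x (unitv j) = msign j * x 0 j.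
Proof.
rewrite /mdot (bigD1 j) //= big1 ?addr0 => [|i hij]; rewrite !mxE ?eqxx /=.
  by rewrite mulr1.
by rewrite (negbTE hij) !mulr0.
Qed.

Lemma msign_space (j : 'I_d) : (0 < (j : nat))%N -> msign j = -1.
Proof. by rewrite /msign; case: (j : nat). Qed.

End MinkowskiForm.
Arguments msign {Q d}.
Arguments unitv {Q d}.
Arguments msign_space {Q d j}.
Arguments two_neq0 {Q}.

Section Spacetime.
Variables (Q : realFieldType) (d : nat).
Hypothesis hd : (3 <= d)%N.
Implicit Types (a b c v w x y z u n : 'rV[Q]_d).

Let i0 : 'I_d := Ordinal (leq_trans (isT : (0 < 3)%N) hd).
Let i1 : 'I_d := Ordinal (leq_trans (isT : (1 < 3)%N) hd).
Let i2 : 'I_d := Ordinal (leq_trans (isT : (2 < 3)%N) hd).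

Definition spnorm x : Q := \sum_(i < d | (0 < (i : nat))%N) x 0 i ^+ 2.

Lemma time_axis_eq (j : 'I_d) : (j : nat) = 0%N -> j = i0.
Proof. by move=> h; apply: val_inj; rewrite /= h. Qed.

Lemma sum_time_axis (F : 'I_d -> Q) : \sum_(i < d | (i : nat) == 0%N) F i = F i0.
Proof. by apply: big_pred1 => i /=; apply/eqP/eqP => [/time_axis_eq|->]. Qed.

Lemma mnorm_split x : mnorm x = x 0 i0 ^+ 2 - spnorm x.
Proof.
rewrite /mnorm /mdot (bigID (fun i : 'I_d => (i : nat) == 0%N)) /=.
rewrite sum_time_axis /msign /= mul1r expr2 -sumrN.
congr (_ + _); apply: eq_big => [i|i]; first by rewrite lt0n.
by move/negbTE => ->; rewrite mulN1r expr2.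
Qed.

Lemma time_coord x y : time x y = (x - y) 0 i0 :> Q.
Proof. by rewrite /time sum_time_axis !mxE. Qed.

Lemma space2_spnorm x y : space2 x y = spnorm (x - y).
Proof. by apply: eq_bigr => i _; rewrite !mxE. Qed.

Lemma interval_mnorm x y : time x y ^+ 2 - space2 x y = mnorm (x - y).
Proof. by rewrite mnorm_split time_coord space2_spnorm. Qed.

Lemma mnorm_time0 w : mnorm w = 0 -> w 0 i0 = 0 -> w = 0.
Proof.
move=> hq h0; have hS : spnorm w = 0 by move: hq; rewrite mnorm_split h0; lra.
apply/rowP => i; rewrite mxE; case: (posnP i) => [/time_axis_eq -> //|hi].
apply/eqP; rewrite -sqrf_eq0; apply/eqP.
by apply: (psumr_eq0P _ hS) => // j _; apply: sqr_ge0.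
Qed.

Lemma null_time_neq0 n : mnorm n = 0 -> n != 0 -> n 0 i0 != 0.
Proof. by move=> hq /eqP hn; apply/eqP => h0; apply: hn; apply: mnorm_time0. Qed.

Lemma null_orth_parallel u n : mnorm u = 0 -> mnorm n = 0 -> n != 0 -> mdot u n = 0 ->
  u = (u 0 i0 / n 0 i0) *: n.
Proof.
move=> hu hn nn hun; have n0 := null_time_neq0 hn nn.
apply/eqP; rewrite -subr_eq0; apply/eqP; apply: mnorm_time0.
  by rewrite mnormB mnormZ mdotZr hun hu hn; ring.
by rewrite !mxE divfK ?subrr.
Qed.

(* Light lines are definable from the light cone: z is on the light line
   through x and x + n iff every event lightlike to both is lightlike to z. *)
Lemma line_char x n z : mnorm n = 0 -> n != 0 ->
  (on_line x n z <-> forall u, lightlike u x -> lightlike u (x + n) -> lightlike u z).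
Proof.
move=> hn nn; split.
  move=> [t ->] u hux hun; rewrite lightlike_line //.
  move: hun; rewrite /lightlike (_ : u - (x + n) = (u - x) - n); last by row_ring.
  rewrite mnormB hux hn => h.
  have -> : mdot (u - x) n = 0 by lra.
  by move: hux; rewrite /lightlike; lra.
move=> h.
have hs s : mnorm (z - x) - 2 * s * mdot (z - x) n = 0.
  rewrite -lightlike_line //; apply/lightlikeC; apply: h.
    by rewrite /lightlike (_ : x + s *: n - x = s *: n) ?mnormZ ?hn ?mulr0 //; row_ring.
  by rewrite /lightlike (_ : x + s *: n - (x + n) = (s - 1) *: n) ?mnormZ ?hn ?mulr0 //; row_ring.
have h0 := hs 0; have h1 := hs 1; rewrite mulr0 mul0r subr0 in h0.
have hB : mdot (z - x) n = 0 by lra.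
exists ((z - x) 0 i0 / n 0 i0); rewrite -(null_orth_parallel h0 hn nn hB); row_ring.
Qed.

(* Orthogonal hyperplanes of light lines are definable too: z - x is orthogonal
   to n iff the light cone of z does not meet the light line through x in exactly
   one point. *)
Lemma orth_char x n z : mnorm n = 0 -> n != 0 ->
  (mdot (z - x) n = 0 <-> ~ exists w, [/\ on_line x n w, lightlike z w &
                                       forall w', on_line x n w' -> lightlike z w' -> w' = w]).
Proof.
move=> hn nn; split.
  move=> hB [w [[t ->] hzw hu]].
  have hq : mnorm (z - x) = 0 by move: hzw; rewrite lightlike_line // hB; lra.
  have h2 : lightlike z (x + (t + 1) *: n) by rewrite lightlike_line // hB hq; lra.
  have e := hu _ (ex_intro _ (t + 1) erefl) h2.
  have : n = (x + (t + 1) *: n) - (x + t *: n) by row_ring.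
  by rewrite e subrr => /eqP; rewrite (negbTE nn).
move=> hne; apply/eqP/negPn/negP => hB; apply: hne.
have h2B : 2 * mdot (z - x) n != 0 by rewrite mulf_neq0 ?two_neq0.
pose t0 := mnorm (z - x) / (2 * mdot (z - x) n).
exists (x + t0 *: n); split; first by exists t0.
  by rewrite lightlike_line // /t0; field.
move=> w' [t' ->]; rewrite lightlike_line // => h.
suff -> : t' = t0 by [].
by apply: (mulIf h2B); rewrite /t0 divfK //; lra.
Qed.

Lemma null_diag (j : 'I_d) (s : Q) : (0 < (j : nat))%N -> s ^+ 2 = 1 ->
  mnorm (unitv i0 + s *: unitv j) = 0.
Proof.
move=> hj hs; rewrite mnormD mnormZ /mnorm mdotZr !mdot_unit.
have hj0 : (j == i0) = false by apply/eqP => e; move: hj; rewrite e.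
by rewrite (msign_space hj) /msign /= !mxE !eqxx hj0 /= hs; ring.
Qed.

Lemma mdot_diag x (j : 'I_d) (s : Q) : (0 < (j : nat))%N ->
  mdot x (unitv i0 + s *: unitv j) = x 0 i0 - s * x 0 j.
Proof. by move=> hj; rewrite mdotDr mdotZr !mdot_unit (msign_space hj) /msign /=; ring. Qed.

Definition lref : 'rV[Q]_d := unitv i0 + 1 *: unitv i1.

Lemma lref_null : mnorm lref = 0.
Proof. by apply: null_diag; rewrite ?expr1n. Qed.

Lemma lref_nz : lref != 0.
Proof.
apply/eqP => /rowP /(_ i0); rewrite !mxE eqxx /= mulr0 addr0 => /eqP.
by rewrite oner_eq0.
Qed.

(* A nonzero lightlike vector a is, on some space axis k, not orthogonal to
   either diagonal vector e_0 +- e_k; this needs two space axes. *)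
Lemma good_space_axis a : mnorm a = 0 -> a != 0 ->
  exists k : 'I_d, [/\ (0 < (k : nat))%N, a 0 i0 - a 0 k != 0 & a 0 i0 + a 0 k != 0].
Proof.
move=> ha na; have a0 := null_time_neq0 ha na.
have sq_eq j : ~~ ((a 0 i0 - a 0 j != 0) && (a 0 i0 + a 0 j != 0)) ->
    a 0 j ^+ 2 = a 0 i0 ^+ 2.
  rewrite negb_and !negbK => /orP[] /eqP h.
    by have -> : a 0 j = a 0 i0 by lra.
  have -> : a 0 j = - a 0 i0 by lra.
  by rewrite sqrrN.
case: (boolP ((a 0 i0 - a 0 i1 != 0) && (a 0 i0 + a 0 i1 != 0))) => [/andP[]|/sq_eq e1].
  by exists i1.
case: (boolP ((a 0 i0 - a 0 i2 != 0) && (a 0 i0 + a 0 i2 != 0))) => [/andP[]|/sq_eq e2].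
  by exists i2.
have hS : a 0 i1 ^+ 2 + a 0 i2 ^+ 2 <= spnorm a.
  rewrite /spnorm (bigD1 i1) //= (bigD1 i2) //= addrA lerDl.
  by apply: sumr_ge0 => i _; apply: sqr_ge0.
have : a 0 i0 ^+ 2 = 0 by have := sqr_ge0 (a 0 i0); move: ha hS; rewrite mnorm_split e1 e2; lra.
by move/eqP; rewrite sqrf_eq0 (negbTE a0).
Qed.

(* Spanning by lightlike vectors: given a nonzero lightlike a, every vector is a
   sum of multiples of lightlike vectors not orthogonal to a.  Stated as an
   induction principle for additive properties. *)
Lemma null_span_ind a (P : 'rV[Q]_d -> Prop) : mnorm a = 0 -> a != 0 -> P 0 ->
  (forall y z, P y -> P z -> P (y + z)) ->
  (forall n t, mnorm n = 0 -> mdot a n != 0 -> P (t *: n)) -> forall y, P y.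
Proof.
move=> ha na P0 PD PZ.
have [k [hk hm hp]] := good_space_axis ha na.
have sq1 : (1 : Q) ^+ 2 = 1 by rewrite expr1n.
have sqm1 : (-1 : Q) ^+ 2 = 1 by rewrite sqrrN expr1n.
have Pdiag (j : 'I_d) (s t : Q) : (0 < (j : nat))%N -> s ^+ 2 = 1 -> a 0 i0 - s * a 0 j != 0 ->
    P (t *: (unitv i0 + s *: unitv j)).
  by move=> hj hs has; apply: PZ; rewrite ?null_diag // mdot_diag.
have Pk (s t : Q) : s ^+ 2 = 1 -> P (t *: (unitv i0 + s *: unitv k)).
  move=> hs; apply: Pdiag => //.
  have [->|->] : s = 1 \/ s = -1.
    by move: hs => /eqP; rewrite sqrf_eq1 => /orP[] /eqP; [left|right].
  - by rewrite mul1r.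
  - by rewrite mulN1r opprK.
have Ptime (t : Q) : P (t *: unitv i0).
  have -> : t *: unitv i0 = (t / 2) *: (unitv i0 + 1 *: unitv k)
                          + (t / 2) *: (unitv i0 + (-1) *: unitv k) by row_field.
  by apply: (PD); apply: Pk.
have Pspace (j : 'I_d) (t : Q) : (0 < (j : nat))%N -> P (t *: unitv j).
  move=> hj.
  case: (boolP (a 0 i0 - a 0 j != 0)) => hj'.
    have -> : t *: unitv j = t *: (unitv i0 + 1 *: unitv j) +
      ((- t / 2) *: (unitv i0 + 1 *: unitv k) + (- t / 2) *: (unitv i0 + (-1) *: unitv k))
      by row_field.
    by apply: (PD); [apply: Pdiag; rewrite ?mul1r | apply: (PD); apply: Pk].
  have hj2 : a 0 i0 - (-1) * a 0 j != 0.
    apply: contraNneq (null_time_neq0 ha na) => h; move: hj'; rewrite negbK => /eqP.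
    lra.
  have -> : t *: unitv j = (- t) *: (unitv i0 + (-1) *: unitv j) +
    ((t / 2) *: (unitv i0 + 1 *: unitv k) + (t / 2) *: (unitv i0 + (-1) *: unitv k))
    by row_field.
  by apply: (PD); [apply: Pdiag | apply: (PD); apply: Pk].
move=> y; rewrite (row_sum_delta y); apply: (big_ind P) => // j _.
by case: (posnP j) => [/time_axis_eq ->|hj]; [apply: Ptime | apply: Pspace].
Qed.

(* Since d >= 3, any two vectors have a nonzero common Minkowski-orthogonal vector:
   it is a nonzero row of the kernel of the d x 2 matrix of the two constraints. *)
Lemma common_orth a b : exists e, [/\ e != 0, mdot e a = 0 & mdot e b = 0].
Proof.
pose M : 'M[Q]_(d, 2) :=
  \matrix_(i, j) (msign i * (if (j : nat) == 0%N then a 0 i else b 0 i)).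
have hM e : mdot e a = (e *m M) 0 0 /\ mdot e b = (e *m M) 0 ord_max.
  by split; rewrite !mxE; apply: eq_bigr => i _; rewrite mxE /=; ring.
have hK : kermx M != 0.
  rewrite -mxrank_eq0 -lt0n mxrank_ker subn_gt0.
  exact: leq_ltn_trans (rank_leq_col M) hd.
have [i hi] : exists i, row i (kermx M) != 0.
  apply/existsP; apply: contraNT hK; rewrite negb_exists => /forallP h.
  by apply/eqP/row_matrixP => i; rewrite row0; apply/eqP; rewrite -[_ == _]negbK h.
exists (row i (kermx M)); have [-> ->] := hM (row i (kermx M)).
by rewrite -row_mul mulmx_ker row0 !mxE.
Qed.

(* Given non-orthogonal lightlike a, b there is a lightlike u orthogonal to
   none of a, b, a + b (obtained by tilting the plane of a, b towards a common
   orthogonal vector e, which is spacelike). *)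
Lemma null_off_plane a b : mnorm a = 0 -> mnorm b = 0 -> mdot a b != 0 ->
  exists u, [/\ mnorm u = 0, mdot a u != 0, mdot b u != 0 & mdot u (a + b) != 0].
Proof.
move=> ha hb hab; have [na _] := mdot_neq0_nz hab.
have [e [ne ea eb]] := common_orth a b.
have qe : mnorm e != 0.
  apply: contra ne => /eqP qe0; have := null_orth_parallel qe0 ha na ea.
  set c := (_ / _) => ec; have : mdot e b = c * mdot a b by rewrite {1}ec mdotZl.
  rewrite eb => /esym/eqP; rewrite mulf_eq0 (negbTE hab) orbF => /eqP c0.
  by rewrite ec c0 scale0r.
pose r := mnorm e / mdot a b.
have [al [nal hal]] : exists al : Q, al != 0 /\ al - r / (2 * al) != 0.
  case: (eqVneq r 2) => hr; [exists 2 | exists 1]; split; rewrite ?two_neq0 ?oner_eq0 //.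
    rewrite hr (_ : (2 : Q) - 2 / (2 * 2) = 3 / 2); last by field.
    by rewrite mulf_neq0 ?invr_eq0 ?pnatr_eq0.
  apply: contraNneq hr => h.
  have -> : r = 2 - 2 * (1 - r / (2 * 1)) by field.
  by rewrite h mulr0 subr0.
pose be := - mnorm e / (2 * al * mdot a b).
have hbe : be != 0 by rewrite /be mulf_neq0 ?oppr_eq0 // invr_eq0 !mulf_neq0 ?two_neq0.
exists (al *: a + be *: b + e); split.
- rewrite mnorm_sum3 !mnormZ ha hb !mdotZl !mdotZr (mdotC a e) (mdotC b e) ea eb /be.
  by field; rewrite nal hab.
- rewrite !mdotDr !mdotZr (mdotC a e) ea (ha : mdot a a = 0).
  by rewrite mulr0 add0r addr0 mulf_neq0.
- rewrite !mdotDr !mdotZr (mdotC b e) eb (hb : mdot b b = 0) (mdotC b a).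
  by rewrite mulr0 !addr0 mulf_neq0.
have -> : mdot (al *: a + be *: b + e) (a + b) = (al - r / (2 * al)) * mdot a b.
  rewrite !mdotDl !mdotDr !mdotZl ea eb (mdotC b a).
  by rewrite (ha : mdot a a = 0) (hb : mdot b b = 0) /be /r; field; rewrite nal hab.
by rewrite mulf_neq0.
Qed.

Lemma null_triangle a b : mnorm a = 0 -> mnorm b = 0 -> mdot a b != 0 ->
  exists c, [/\ mnorm c = 0, mnorm (a + b - c) = 0, mdot a c != 0, mdot b c != 0
              & a + b - c != 0].
Proof.
move=> ha hb hab; have [u [qu hau hbu huv]] := null_off_plane ha hb hab.
have qv : mnorm (a + b) = 2 * mdot a b by rewrite mnormD ha hb; ring.
pose s := mnorm (a + b) / (2 * mdot u (a + b)).
have ns : s != 0 by rewrite /s qv !mulf_neq0 ?invr_eq0 ?mulf_neq0 ?two_neq0.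
exists (s *: u); split.
- by rewrite mnormZ qu mulr0.
- by rewrite mnormB mnormZ qu mdotZr (mdotC _ u) /s; field.
- by rewrite mdotZr mulf_neq0.
- by rewrite mdotZr mulf_neq0.
apply: contraTneq hab => /eqP; rewrite subr_eq0 => /eqP e.
move: qv; rewrite e mnormZ qu mulr0 negbK => /esym/eqP.
by rewrite mulf_eq0 (negbTE two_neq0).
Qed.

Lemma null_linear_zero (L : 'rV[Q]_d -> Q) : (forall x y, L (x + y) = L x + L y) ->
  (forall t x, L (t *: x) = t * L x) -> (forall n, mnorm n = 0 -> L n = 0) -> forall x, L x = 0.
Proof.
move=> LD LZ Ln; apply: (null_span_ind lref_null lref_nz).
- by rewrite -(scale0r (0 : 'rV[Q]_d)) LZ mul0r.
- by move=> y z hy hz; rewrite LD hy hz addr0.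
by move=> n t hn _; rewrite LZ Ln ?mulr0.
Qed.

Section ConePreserving.
Variable f : 'rV[Q]_d -> 'rV[Q]_d.
Hypothesis f_light : forall x y, lightlike (f x) (f y) <-> lightlike x y.
Hypothesis f_surj : forall y, exists x, f x = y.
Hypothesis f_inj : injective f.

Lemma image_null_increment x n : mnorm n = 0 -> mnorm (f (x + n) - f x) = 0.
Proof. by move=> hn; apply/f_light; rewrite /lightlike addrC addKr. Qed.

Lemma image_increment_nz x n : n != 0 -> f (x + n) - f x != 0.
Proof.
move=> nn; rewrite subr_eq0; apply: contra nn => /eqP /f_inj /eqP.
by rewrite -subr_eq0 addrC addKr.
Qed.

Lemma image_line x n : mnorm n = 0 -> n != 0 ->
  forall z, on_line x n z <-> on_line (f x) (f (x + n) - f x) (f z).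
Proof.
move=> hn nn z.
have e : f x + (f (x + n) - f x) = f (x + n) by rewrite addrC subrK.
rewrite (line_char x z hn nn).
rewrite (line_char (f x) (f z) (image_null_increment x hn) (image_increment_nz x nn)) e.
split=> h u; last by move=> hx hxn; apply/f_light; apply: h; apply/f_light.
by have [v <-] := f_surj u; rewrite !f_light; apply: h.
Qed.

Lemma image_orth x n z : mnorm n = 0 -> n != 0 ->
  mdot (z - x) n = 0 <-> mdot (f z - f x) (f (x + n) - f x) = 0.
Proof.
move=> hn nn.
rewrite (orth_char x z hn nn).
rewrite (orth_char (f x) (f z) (image_null_increment x hn) (image_increment_nz x nn)).
have lT := image_line x hn nn.
split=> hne [w [hw hzw hu]]; apply: hne.
  have [v ev] := f_surj w; subst w.
  exists v; split; [by rewrite lT | by rewrite -f_light |].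
  by move=> w' hw' hzw'; apply: f_inj; apply: hu; [rewrite -lT | rewrite f_light].
exists (f w); split; [by rewrite -lT | by rewrite f_light |].
move=> w' hw' hzw'; have [v ev] := f_surj w'; subst w'.
by congr f; apply: hu; [rewrite lT | rewrite -f_light].
Qed.

Lemma image_opposite_sides_orth x a b : mnorm a = 0 -> mnorm b = 0 -> mdot a b != 0 ->
  mdot (f (x + a + b) - f (x + a)) (f (x + b) - f x) = 0.
Proof.
move=> ha hb hab; have [_ nb] := mdot_neq0_nz hab.
set B1 := f (x + b) - f x; set B2 := f (x + a + b) - f (x + a).
have qB1 : mnorm B1 = 0 := image_null_increment x hb.
apply/eqP/negPn/negP => hne; move: hab; apply/negP; rewrite negbK.
pose al := - mdot (f x - f (x + a)) B2 / mdot B1 B2.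
have [z ez] := f_surj (f x + al *: B1).
have h1 : mdot (z - x) b = 0.
  rewrite (image_orth x z hb nb) ez -/B1 (_ : f x + al *: B1 - f x = al *: B1); last by row_ring.
  by rewrite mdotZl (qB1 : mdot B1 B1 = 0) mulr0.
have h2 : mdot (z - (x + a)) b = 0.
  rewrite (image_orth (x + a) z hb nb) ez -/B2.
  rewrite (_ : f x + al *: B1 - f (x + a) = (f x - f (x + a)) + al *: B1); last by row_ring.
  by rewrite mdotC in hne; rewrite mdotDl mdotZl /al; field.
have -> : a = (z - x) - (z - (x + a)) by row_ring.
by rewrite mdotBl h1 h2 subrr.
Qed.

Lemma parallelogram_rule x a b : mnorm a = 0 -> mnorm b = 0 -> mdot a b != 0 ->
  f (x + a + b) = f (x + a) + f (x + b) - f x.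
Proof.
move=> ha hb hab; have [na nb] := mdot_neq0_nz hab.
set A := f (x + a) - f x; set B1 := f (x + b) - f x; set B2 := f (x + a + b) - f (x + a).
have qA : mnorm A = 0 := image_null_increment x ha.
have qB1 : mnorm B1 = 0 := image_null_increment x hb.
have qB2 : mnorm B2 = 0 := image_null_increment (x + a) hb.
(* B2 is a multiple kb of B1 ... *)
have := null_orth_parallel qB2 qB1 (image_increment_nz x nb) (image_opposite_sides_orth x ha hb hab).
set kb := (_ / _) => eB2.
(* ... and kb = 1 because f (x + a + b) is lightlike to f (x + b) *)
have hAB : mdot A B1 != 0.
  apply: contra hab => /eqP e; apply/eqP.
  have : lightlike (f (x + a)) (f (x + b)).
    rewrite /lightlike (_ : f (x + a) - f (x + b) = A - B1); last by row_ring.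
    by rewrite mnormB qA qB1 e; ring.
  rewrite f_light /lightlike (_ : x + a - (x + b) = a - b); last by row_ring.
  by rewrite mnormB ha hb; lra.
have hkb : kb = 1.
  have : lightlike (f (x + a + b)) (f (x + b)).
    by rewrite f_light /lightlike (_ : x + a + b - (x + b) = a) //; row_ring.
  rewrite /lightlike (_ : f (x + a + b) - f (x + b) = A + (kb - 1) *: B1); last first.
    by rewrite -(subrK (f (x + a)) (f (x + a + b))) -/B2 eB2 /A /B1; row_ring.
  rewrite mnormD mnormZ mdotZr qA qB1 mulr0 !addr0 add0r => /eqP.
  by rewrite !mulf_eq0 (negbTE two_neq0) (negbTE hAB) orbF /= subr_eq0 => /eqP.
by rewrite -(subrK (f (x + a)) (f (x + a + b))) -/B2 eB2 hkb scale1r /B1; row_ring.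
Qed.

Lemma null_increment_const a : mnorm a = 0 -> forall x, f (x + a) - f x = f a - f 0.
Proof.
move=> ha; case: (eqVneq a 0) => [->|na] x; first by rewrite !addr0 !subrr.
suff HP y : forall x, f (x + y + a) - f (x + y) = f (x + a) - f x.
  by move: (HP x 0); rewrite !add0r.
move: y; apply: (null_span_ind ha na) => [z|y1 y2 h1 h2 z|n t hn hna z].
- by rewrite addr0.
- by rewrite addrA h2 h1.
case: (eqVneq t 0) => [->|nt]; first by rewrite scale0r addr0.
have hn' : mnorm (t *: n) = 0 by rewrite mnormZ hn mulr0.
have hna' : mdot a (t *: n) != 0 by rewrite mdotZr mulf_neq0.
rewrite (_ : z + t *: n + a = z + a + t *: n); last by row_ring.
by rewrite (parallelogram_rule z ha hn' hna'); row_ring.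
Qed.

Lemma increment_const x y : f (x + y) - f x = f y - f 0.
Proof.
move: y x; apply: (null_span_ind lref_null lref_nz) => [z|y1 y2 h1 h2 z|n t hn _ z].
- by rewrite addr0 !subrr.
- rewrite addrA (_ : f (z + y1 + y2) - f z = (f (z + y1 + y2) - f (z + y1)) + (f (z + y1) - f z));
    last by row_ring.
  rewrite h2 h1 (_ : f (y1 + y2) - f 0 = (f (y1 + y2) - f y1) + (f y1 - f 0)); last by row_ring.
  by rewrite h2.
by apply: null_increment_const; rewrite mnormZ hn mulr0.
Qed.

Definition centered x := f x - f 0.

Lemma centered_sub x y : centered x - centered y = f x - f y.
Proof. by rewrite /centered; row_ring. Qed.

Lemma centered_light x y : lightlike (centered x) (centered y) <-> lightlike x y.
Proof. by rewrite /lightlike centered_sub; apply: f_light. Qed.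

Lemma centered_surj y : exists x, centered x = y.
Proof. by have [x hx] := f_surj (y + f 0); exists x; rewrite /centered hx addrK. Qed.

Lemma centered_inj : injective centered.
Proof. by move=> x y /(congr1 (+%R^~ (f 0))); rewrite /centered !subrK; apply: f_inj. Qed.

Lemma centered_add x y : centered (x + y) = centered x + centered y.
Proof. by rewrite /centered -(subrK (f x) (f (x + y))) increment_const; row_ring. Qed.

End ConePreserving.

Section AdditiveConePreserving.
Variable g : 'rV[Q]_d -> 'rV[Q]_d.
Hypothesis g_light : forall x y, lightlike (g x) (g y) <-> lightlike x y.
Hypothesis g_surj : forall y, exists x, g x = y.
Hypothesis g_inj : injective g.
Hypothesis g_add : forall x y, g (x + y) = g x + g y.

Lemma g0 : g 0 = 0.
Proof.
have h := g_add 0 0; rewrite addr0 in h.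
by have := congr1 (fun v => v - g 0) h; rewrite subrr addrK.
Qed.

Lemma gB x y : g (x - y) = g x - g y.
Proof. by have := g_add (x - y) y; rewrite subrK => ->; rewrite addrK. Qed.

Lemma g_nz v : v != 0 -> g v != 0.
Proof. by move=> /eqP nv; apply/eqP => h; apply: nv; apply: g_inj; rewrite h g0. Qed.

Lemma g_null y : mnorm (g y) = 0 <-> mnorm y = 0.
Proof. by have := g_light y 0; rewrite /lightlike g0 !subr0. Qed.

Lemma g_scal a t : mnorm a = 0 -> a != 0 -> exists k, g (t *: a) = k *: g a.
Proof.
move=> ha na; have : on_line (g 0) (g (0 + a) - g 0) (g (t *: a)).
  by rewrite -image_line //; exists t; rewrite add0r.
by rewrite g0 add0r subr0 => -[k ->]; exists k; rewrite add0r.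
Qed.

Lemma g_nonorth a b : mnorm a = 0 -> mnorm b = 0 -> mdot a b != 0 -> mdot (g a) (g b) != 0.
Proof.
move=> ha hb hab; apply: contra hab => /eqP e; apply/eqP.
have : lightlike (g a) (g b) by rewrite /lightlike mnormB e !(proj2 (g_null _)) //; ring.
by rewrite g_light /lightlike mnormB ha hb; lra.
Qed.

(* The scaling factors along two non-orthogonal light lines agree: decompose
   a + b into two other lightlike vectors and use independence of images. *)
Lemma scale_factor_eq a b t k k' : mnorm a = 0 -> mnorm b = 0 -> mdot a b != 0 ->
  g (t *: a) = k *: g a -> g (t *: b) = k' *: g b -> k = k'.
Proof.
move=> ha hb hab hk hk'.
have [c [qc qc' Bac Bbc nc']] := null_triangle ha hb hab.
have [_ nc] := mdot_neq0_nz Bac.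
have [kc hkc] := g_scal t qc nc; have [kc' hkc'] := g_scal t qc' nc'.
have E : (k - kc') *: g a + (k' - kc') *: g b + (kc' - kc) *: g c = 0.
  have gc' : g (a + b - c) = g a + g b - g c by rewrite gB g_add.
  have : g (t *: a) + g (t *: b) = g (t *: c) + g (t *: (a + b - c)).
    by rewrite -!g_add; congr g; row_ring.
  rewrite hk hk' hkc hkc' gc' => e.
  apply/eqP; rewrite -subr_eq0 -(subrr (k *: g a + k' *: g b)) {2}e; apply/eqP; row_ring.
have [] := null_triple_indep (proj2 (g_null a) ha) (proj2 (g_null b) hb) (proj2 (g_null c) qc)
  (g_nonorth ha hb hab) (g_nonorth ha qc Bac) (g_nonorth hb qc Bbc) E.
lra.
Qed.

Definition mu (t : Q) : Q := g (t *: lref) 0 i0 / g lref 0 i0.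

Lemma g_lref_time : g lref 0 i0 != 0.
Proof. by apply: null_time_neq0; [apply/g_null; apply: lref_null | apply: g_nz; apply: lref_nz]. Qed.

Lemma g_mu_lref t : g (t *: lref) = mu t *: g lref.
Proof.
have [k hk] := g_scal t lref_null lref_nz.
by rewrite hk /mu hk mxE mulfK // g_lref_time.
Qed.

(* The scaling factor is mu t along every light line: directly if the line is not
   orthogonal to lref, and via e_0 - e_1 (which is not orthogonal to lref) otherwise. *)
Lemma g_mu_null n t : mnorm n = 0 -> g (t *: n) = mu t *: g n.
Proof.
move=> hn; case: (eqVneq n 0) => [->|nn]; first by rewrite scaler0 g0 scaler0.
have [k hk] := g_scal t hn nn; rewrite hk; congr (_ *: _).
have [hnl|hnl] := eqVneq (mdot n lref) 0; last exact: scale_factor_eq hn lref_null hnl hk (g_mu_lref t).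
pose b : 'rV[Q]_d := unitv i0 + (-1) *: unitv i1.
have hb : mnorm b = 0 by apply: null_diag; rewrite ?sqrrN ?expr1n.
have hlb : mdot lref b != 0.
  rewrite mdot_diag // /lref !mxE !eqxx /= mulr0 mulr1 addr0 add0r mulN1r opprK.
  by rewrite -mulr2n mulrn_eq0 oner_eq0.
have [_ nb] := mdot_neq0_nz hlb.
have := null_orth_parallel hn lref_null lref_nz hnl; set c := (_ / _) => en.
have nc : c != 0 by apply: contraNneq nn => c0; rewrite en c0 scale0r.
have hnb : mdot n b != 0 by rewrite en mdotZl mulf_neq0.
have [kb hkb] := g_scal t hb nb.
by rewrite (scale_factor_eq hn hb hnb hk hkb) (scale_factor_eq lref_null hb hlb (g_mu_lref t) hkb).
Qed.

Lemma g_mu v t : g (t *: v) = mu t *: g v.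
Proof.
move: v; apply: (null_span_ind lref_null lref_nz) => [|y z hy hz|n s hn _].
- by rewrite scaler0 g0 scaler0.
- by rewrite !scalerDr !g_add scalerDr hy hz.
by apply: g_mu_null; rewrite mnormZ hn mulr0.
Qed.

Lemma muD t s : mu (t + s) = mu t + mu s.
Proof.
have h := g_mu_lref (t + s); rewrite scalerDl g_add !g_mu_lref -scalerDl in h.
exact: scale_cancel (esym h) (g_nz lref_nz).
Qed.

Lemma mu1 : mu 1 = 1.
Proof.
have h := g_mu_lref 1; rewrite scale1r -{1}(scale1r (g lref)) in h.
exact: scale_cancel (esym h) (g_nz lref_nz).
Qed.

Lemma mu_surj k : exists t, mu t = k.
Proof.
have [z hz] := g_surj (k *: g lref).
have : on_line (g 0) (g (0 + lref) - g 0) (g z).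
  by rewrite g0 add0r subr0 hz; exists k; rewrite add0r.
rewrite -image_line ?lref_null ?lref_nz // => -[t]; rewrite add0r => ez.
exists t; apply: scale_cancel (g_nz lref_nz).
by rewrite -g_mu_lref -ez hz.
Qed.

Hypothesis g_simul :
  forall x, x 0 i0 = 0 -> g x 0 i0 = 0 -> mnorm (g x) = mnorm x.

(* Some nonzero vector stays simultaneous with 0 under g (using two space axes
   and the surjectivity of mu). *)
Lemma simultaneous_witness : exists v, [/\ v != 0, v 0 i0 = 0 & g v 0 i0 = 0].
Proof.
have e1_nz : unitv i1 != 0 :> 'rV[Q]_d.
  by apply/eqP => /rowP /(_ i1); rewrite !mxE !eqxx => /eqP; rewrite oner_eq0.
have [h|h] := eqVneq (g (unitv i1) 0 i0) 0; first by exists (unitv i1); rewrite !mxE.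
have [s hs] := mu_surj (- g (unitv i2) 0 i0 / g (unitv i1) 0 i0).
exists (s *: unitv i1 + unitv i2); split.
- by apply/eqP => /rowP /(_ i2); rewrite !mxE !eqxx /= mulr0 add0r => /eqP; rewrite oner_eq0.
- by rewrite !mxE /= mulr0 addr0.
by rewrite g_add g_mu !mxE hs; field.
Qed.

(* mu is additive, unital and (by g_simul along a witness) preserves squares,
   hence it is the identity. *)
Lemma mu_id t : mu t = t.
Proof.
have [v [nv v0 gv0]] := simultaneous_witness.
have qv : mnorm v != 0 by apply: contra nv => /eqP h; apply/eqP; apply: mnorm_time0.
have hs s : mu s ^+ 2 = s ^+ 2.
  have : mnorm (g (s *: v)) = mnorm (s *: v).
    by apply: g_simul; rewrite ?g_mu !mxE ?v0 ?gv0 mulr0.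
  rewrite g_mu !mnormZ g_simul // => /eqP.
  by rewrite -subr_eq0 -mulrBl mulf_eq0 (negbTE qv) orbF subr_eq0 => /eqP.
have h1 := hs (t + 1); rewrite muD mu1 !sqrrD expr1n hs in h1.
lra.
Qed.

Lemma g_linear v t : g (t *: v) = t *: g v.
Proof. by rewrite g_mu mu_id. Qed.

(* For lightlike a, the lines x + t a meet the light cone of 0 at corresponding
   parameters before and after g; comparing the parameters gives a relation
   between norms and products. *)
Lemma null_cone_ratio x a : mnorm a = 0 ->
  mnorm (g x) * mdot x a = mnorm x * mdot (g x) (g a).
Proof.
move=> ha; have hga : mnorm (g a) = 0 := proj2 (g_null a) ha.
have key t : mnorm (x + t *: a) = 0 <-> mnorm (g x + t *: g a) = 0.
  by rewrite -g_linear -g_add g_null.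
have ex1 t : mnorm (x + t *: a) = mnorm x + 2 * t * mdot x a.
  by rewrite mnormD mnormZ ha mdotZr; ring.
have ex2 t : mnorm (g x + t *: g a) = mnorm (g x) + 2 * t * mdot (g x) (g a).
  by rewrite mnormD mnormZ hga mdotZr; ring.
have [hB|hB] := eqVneq (mdot x a) 0.
  rewrite hB mulr0; have [->|hq] := eqVneq (mnorm x) 0; first by rewrite mul0r.
  have [->|hB'] := eqVneq (mdot (g x) (g a)) 0; first by rewrite mulr0.
  pose t1 := - mnorm (g x) / (2 * mdot (g x) (g a)).
  have : mnorm (g x + t1 *: g a) = 0 by rewrite ex2 /t1; field.
  by rewrite -key ex1 hB mulr0 addr0 => /eqP; rewrite (negbTE hq).
pose t0 := - mnorm x / (2 * mdot x a).
have : mnorm (x + t0 *: a) = 0 by rewrite ex1 /t0; field.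
rewrite key ex2 /t0 => h; apply/eqP; rewrite -subr_eq0; apply/eqP.
have -> : mnorm (g x) * mdot x a - mnorm x * mdot (g x) (g a) =
   (mnorm (g x) + 2 * (- mnorm x / (2 * mdot x a)) * mdot (g x) (g a)) * mdot x a by field.
by rewrite h mul0r.
Qed.

Section Witness.
Variable v : 'rV[Q]_d.
Hypotheses (nv : v != 0) (v0 : v 0 i0 = 0) (gv0 : g v 0 i0 = 0).

Let qv : mnorm v != 0.
Proof. by apply: contra nv => /eqP h; apply/eqP; apply: mnorm_time0. Qed.

Lemma mdot_g_witness y : mdot (g v) (g y) = mdot v y.
Proof.
apply/eqP; rewrite -subr_eq0; apply/eqP; move: y.
apply: (null_linear_zero (L := fun z => mdot (g v) (g z) - mdot v z)).
- by move=> z1 z2; rewrite g_add !mdotDr; ring.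
- by move=> t z; rewrite g_linear !mdotZr; ring.
move=> n hn; have := null_cone_ratio v hn; rewrite g_simul // => /eqP.
by rewrite -subr_eq0 -mulrBr mulf_eq0 (negbTE qv) /= subr_eq0 => /eqP ->; rewrite subrr.
Qed.

(* Products with lightlike vectors are preserved: apply null_cone_ratio to
   v + s z for three values of s and eliminate. *)
Lemma mdot_g_null z a : mnorm a = 0 -> mdot (g z) (g a) = mdot z a.
Proof.
move=> ha.
have hs s : (mnorm v + 2 * (s * mdot v z) + s ^+ 2 * mnorm (g z)) * (mdot v a + s * mdot z a) =
            (mnorm v + 2 * (s * mdot v z) + s ^+ 2 * mnorm z) * (mdot v a + s * mdot (g z) (g a)).
  have := null_cone_ratio (v + s *: z) ha.
  by rewrite g_add g_linear !mnormD !mnormZ !mdotDl !mdotZl !mdotZr g_simul // !mdot_g_witness.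
have h1 := hs 1; have h2 := hs (-1); have h3 := hs 2.
have E : 6 * (mnorm v * (mdot z a - mdot (g z) (g a))) = 0.
  move: h1 h2 h3; set A := mnorm v; set G := mdot v z; set Y' := mnorm (g z); set Y := mnorm z.
  set b0 := mdot v a; set b1 := mdot z a; set b1' := mdot (g z) (g a) => h1 h2 h3.
  have -> : 6 * (A * (b1 - b1')) =
    6 * ((A + 2 * (1 * G) + 1 ^+ 2 * Y') * (b0 + 1 * b1) - (A + 2 * (1 * G) + 1 ^+ 2 * Y) * (b0 + 1 * b1'))
    - 2 * ((A + 2 * (-1 * G) + (-1) ^+ 2 * Y') * (b0 + -1 * b1)
           - (A + 2 * (-1 * G) + (-1) ^+ 2 * Y) * (b0 + -1 * b1'))
    - ((A + 2 * (2 * G) + 2 ^+ 2 * Y') * (b0 + 2 * b1) - (A + 2 * (2 * G) + 2 ^+ 2 * Y) * (b0 + 2 * b1'))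
    by ring.
  by rewrite h1 h2 h3 !subrr; ring.
by move/eqP: E; rewrite !mulf_eq0 (negbTE qv) pnatr_eq0 /= subr_eq0 => /eqP.
Qed.

End Witness.

Lemma g_mdot y z : mdot (g y) (g z) = mdot y z.
Proof.
have [v [nv v0 gv0]] := simultaneous_witness.
apply/eqP; rewrite -subr_eq0; apply/eqP; move: z.
apply: (null_linear_zero (L := fun z => mdot (g y) (g z) - mdot y z)).
- by move=> z1 z2; rewrite g_add !mdotDr; ring.
- by move=> t z; rewrite g_linear !mdotZr; ring.
by move=> n hn; rewrite (mdot_g_null nv v0 gv0) // subrr.
Qed.

End AdditiveConePreserving.

Lemma linear_row_map (g : 'rV[Q]_d -> 'rV[Q]_d) :
  (forall x y, g (x + y) = g x + g y) -> (forall x (t : Q), g (t *: x) = t *: g x) ->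
  forall x, g x = x *m \matrix_(i, j) g (unitv i) 0 j.
Proof.
move=> g_add g_lin x.
have g0 : g 0 = 0 by have := g_lin 0 0; rewrite !scale0r.
rewrite {1}(row_sum_delta x) (big_morph g g_add g0).
apply/rowP => j; rewrite summxE mxE; apply: eq_bigr => i _.
by rewrite g_lin !mxE.
Qed.

Theorem cone_preserving_poincare (f : 'rV[Q]_d -> 'rV[Q]_d) :
  (forall x y, lightlike (f x) (f y) <-> lightlike x y) ->
  (forall y, exists x, f x = y) -> injective f ->
  (forall x y, time x y = 0 -> time (f x) (f y) = 0 -> space2 x y = space2 (f x) (f y)) ->
  poincare f.
Proof.
move=> f_light f_surj f_inj f_simul.
pose g := centered f.
have g_light := centered_light f_light.
have g_surj := centered_surj f_surj.
have g_inj := centered_inj f_inj.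
have g_add := centered_add f_light f_surj f_inj.
have g_simul x : x 0 i0 = 0 -> g x 0 i0 = 0 -> mnorm (g x) = mnorm x.
  move=> h1 h2; have t1 : time x 0 = 0 by rewrite time_coord subr0.
  have t2 : time (f x) (f 0) = 0 by rewrite time_coord.
  have := f_simul _ _ t1 t2; move: (interval_mnorm x 0) (interval_mnorm (f x) (f 0)).
  by rewrite t1 t2 subr0; rewrite /g /centered; lra.
have g_lin := g_linear g_light g_surj g_inj g_add g_simul.
have fA x : f x = x *m (\matrix_(i, j) g (unitv i) 0 j) + f 0.
  by rewrite -(linear_row_map g_add g_lin) /g /centered subrK.
split; first by exists (\matrix_(i, j) g (unitv i) 0 j), (f 0).
  exact: inj_surj_bijective.
move=> x y; rewrite !interval_mnorm -(centered_sub f) -(gB g_add).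
by rewrite /mnorm (g_mdot g_light g_surj g_inj g_add g_simul).
Qed.

Lemma time_pt11 : time 0 (pt11 Q d) = -1.
Proof. by rewrite time_coord !mxE sub0r. Qed.

Lemma space2_pt11 : space2 0 (pt11 Q d) = 1.
Proof.
rewrite space2_spnorm /spnorm (bigD1 i1) //= big1 ?addr0.
  by rewrite !mxE /= sub0r sqrrN expr1n.
move=> i /andP[hi hne]; rewrite !mxE.
have hi2 : (2 <= i)%N.
  have hi1 : (i : nat) != 1%N by apply: contra hne => /eqP e; apply/eqP/val_inj.
  by move: hi hi1; case: (i : nat) => [|[|n]].
by rewrite leqNgt in hi2; rewrite (negbTE hi2) subrr expr0n.
Qed.

Lemma lightlike_separates y y' : y != y' -> exists z, lightlike y z /\ ~ lightlike y' z.
Proof.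
move=> hne; pose w := y - y'; have nw : w != 0 by rewrite /w subr_eq0.
have [hw|hw] := eqVneq (mnorm w) 0; last first.
  exists y; split; first exact: lightlike_refl.
  by rewrite /lightlike -opprB mnormN => /eqP; rewrite (negbTE hw).
have [s [hs hB]] : exists s : Q, s ^+ 2 = 1 /\ mdot w (unitv i0 + s *: unitv i1) != 0.
  have [h1|h1] := eqVneq (mdot w (unitv i0 + 1 *: unitv i1)) 0; last by exists 1; rewrite expr1n.
  exists (-1); split; first by rewrite sqrrN expr1n.
  apply: contra nw => /eqP h2; move: h1 h2; rewrite !mdot_diag // mul1r mulN1r opprK => h1 h2.
  by apply/eqP; apply: mnorm_time0 => //; lra.
exists (y + (unitv i0 + s *: unitv i1)); split.
  by rewrite /lightlike opprD addrA subrr add0r mnormN null_diag.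
rewrite /lightlike (_ : y' - _ = - (w + (unitv i0 + s *: unitv i1))); last by rewrite /w; row_ring.
rewrite mnormN mnormD hw null_diag // add0r addr0 => /eqP.
by rewrite mulf_eq0 (negbTE two_neq0) (negbTE hB).
Qed.

Section SpecialRelativity.
Variables (B : Type) (IOb : B -> Prop) (Ph : B -> B -> Prop) (W : B -> B -> 'rV[Q]_d -> Prop).

Definition photon (h : B) x y : Prop := exists (p b : B), [/\ Ph p b, W h p x & W h p y].

(* The formula phi(h) of SPR+ stating "h sees light with speed 1":
     forall x y, photon h x y <-> space2 x y = time x y ^2,
   with h the body variable 0, x_i the quantity variable i and y_i the
   quantity variable d + i.  Lacking subtraction in the language, the equation
   is written as sum_i (x_i^2 + y_i^2) + 2 x_0 y_0 = sum_i 2 x_i y_i + x_0^2 + y_0^2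
   (sums over the space axes i). *)
Definition space_axes : seq nat :=
  map (fun i : 'I_d => (i : nat)) (filter (fun i : 'I_d => (0 < (i : nat))%N) (enum 'I_d)).

Definition cone_lhs : qterm :=
  foldr (fun j t => QAdd (QAdd (QMul (QV j) (QV j)) (QMul (QV (d + j)) (QV (d + j)))) t)
    (QAdd (QMul (QV 0) (QV d)) (QMul (QV 0) (QV d))) space_axes.
Definition cone_rhs : qterm :=
  foldr (fun j t => QAdd (QAdd (QMul (QV j) (QV (d + j))) (QMul (QV j) (QV (d + j)))) t)
    (QAdd (QMul (QV 0) (QV 0)) (QMul (QV d) (QV d))) space_axes.

Definition photon_form : Defs.form d :=
  FExB 1 (FExB 2 (FAnd (FPh d 1 2) (FAnd (FW 0 1 (fun i => QV i)) (FW 0 1 (fun i => QV (d + i)))))).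
Definition cone_form : Defs.form d := FEqQ d cone_lhs cone_rhs.

Definition forall_qs (l : seq nat) (psi : Defs.form d) : Defs.form d :=
  foldr (fun (j : nat) (phi : Defs.form d) => FAllQ j phi) psi l.

Definition light_speed1_form : Defs.form d :=
  forall_qs (iota 0 (d + d))
    (FAnd (FImp photon_form cone_form) (FImp cone_form photon_form)).

Lemma light_speed1_form_closed : all (fun j => j == 0%N) (fvB light_speed1_form).
Proof.
have fvB_allQ l (psi : Defs.form d) : fvB (forall_qs l psi) = fvB psi.
  by elim: l => //= n l ->.
by rewrite /light_speed1_form fvB_allQ.
Qed.

Lemma holds_allQ eB (eQ : nat -> Q) l (psi : Defs.form d) :
  holds IOb Ph W eB eQ (forall_qs l psi) <->
  forall e', (forall j, j \notin l -> e' j = eQ j) -> holds IOb Ph W eB e' psi.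
Proof.
elim: l eQ => [|n l IH] eQ /=.
  split=> [h e' he|]; last by apply.
  by rewrite (_ : e' = eQ) //; apply: functional_extensionality => j; apply: he.
split=> [h e' he|h q].
  have := h (e' n); rewrite IH; apply => j hj.
  rewrite /upd; case: eqP => [->//|/eqP hjn]; apply: he.
  by rewrite in_cons negb_or hjn hj.
rewrite IH => e' he; apply: h => j; rewrite in_cons negb_or => /andP[hjn hjl].
by rewrite he // /upd (negbTE hjn).
Qed.

Lemma qeval_foldr (e : nat -> Q) (F : nat -> qterm) t l :
  qeval e (foldr (fun j s => QAdd (F j) s) t l) = \sum_(j <- l) qeval e (F j) + qeval e t.
Proof. by elim: l => [|j l IH] /=; rewrite ?big_nil ?add0r // big_cons IH addrA. Qed.

Lemma sum_space_axes (F : nat -> Q) :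
  \sum_(j <- space_axes) F j = \sum_(i < d | (0 < (i : nat))%N) F i.
Proof. by rewrite /space_axes big_map big_filter big_enum_cond. Qed.

Definition val_x (e : nat -> Q) : 'rV[Q]_d := \row_i e (i : nat).
Definition val_y (e : nat -> Q) : 'rV[Q]_d := \row_i e (d + i)%N.

Lemma cone_form_sem eB e : holds IOb Ph W eB e cone_form <->
  space2 (val_x e) (val_y e) = time (val_x e) (val_y e) ^+ 2.
Proof.
rewrite /= /cone_lhs /cone_rhs !qeval_foldr !sum_space_axes /=.
rewrite time_coord space2_spnorm /spnorm !mxE addn0.
set SL := \sum_(i < d | _) _; set SR := \sum_(i < d | _) _.
have -> : \sum_(i < d | (0 < (i : nat))%N) (val_x e - val_y e) 0 i ^+ 2 = SL - SR.
  by rewrite /SL /SR -sumrB; apply: eq_bigr => i _; rewrite !mxE; ring.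
split=> h; first by rewrite -[SL](addrK (e 0%N * e d + e 0%N * e d)) h; ring.
by rewrite -[SL](subrK SR) h; ring.
Qed.

Lemma photon_form_sem eB e :
  holds IOb Ph W eB e photon_form <-> photon (eB 0%N) (val_x e) (val_y e).
Proof.
rewrite /= /upd /=; split.
  by move=> [p [b [hp [hx hy]]]]; exists p, b.
by move=> [p [b [hp hx hy]]]; exists p, b.
Qed.

Lemma holds_light_speed1 eB eQ h : holds IOb Ph W (upd eB 0 h) eQ light_speed1_form <->
  forall x y, photon h x y <-> space2 x y = time x y ^+ 2.
Proof.
have body e : holds IOb Ph W (upd eB 0 h) e
    (FAnd (FImp photon_form cone_form) (FImp cone_form photon_form)) <->
    (photon h (val_x e) (val_y e) <-> space2 (val_x e) (val_y e) = time (val_x e) (val_y e) ^+ 2).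
  have := photon_form_sem (upd eB 0 h) e; have := cone_form_sem (upd eB 0 h) e.
  rewrite /= /upd /= => -> ->; tauto.
rewrite holds_allQ; split=> [H x y|H e' _]; last by apply/body.
pose e' j := if (j < d)%N then x 0 (insubd i0 j)
             else if (j < d + d)%N then y 0 (insubd i0 (j - d)%N) else eQ j.
have he j : j \notin iota 0 (d + d) -> e' j = eQ j.
  rewrite mem_iota add0n /= /e' => hj.
  have hj' : ~~ (j < d)%N by apply: contra hj => hj; apply: leq_trans hj (leq_addr _ _).
  by rewrite (negbTE hj') (negbTE hj).
have ex : val_x e' = x by apply/rowP => i; rewrite !mxE /e' ltn_ord valKd.
have ey : val_y e' = y.
  apply/rowP => i; rewrite !mxE /e' ltnNge leq_addr /= ltn_add2l ltn_ord addKn.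
  by rewrite valKd.
by have := proj1 (body e') (H e' he); rewrite ex ey.
Qed.

(* In SR every inertial observer sees photons exactly along the light cone:
   the observer of AxLight has light speed c = 1 by AxSymD(ii), and SPR+
   transports this to every inertial observer. *)
Lemma photon_lightlike : SR IOb Ph W ->
  forall h, IOb h -> forall x y, photon h x y <-> lightlike x y.
Proof.
move=> [SPR [m0 [c [hm0 hc hl]]] _ _ [_ hS2]] h hh.
have [p [b [hp hx hy]]] := hS2 m0 hm0.
have := proj1 (hl 0 (pt11 Q d)) (ex_intro _ p (ex_intro _ b (And3 hp hx hy))).
rewrite time_pt11 space2_pt11 sqrrN expr1n mulr1 => hc2.
have c1 : c = 1.
  have /eqP : (c - 1) * (c + 1) = 0 by rewrite -subr_sqr -hc2 expr1n subrr.
  by rewrite mulf_eq0 => /orP[] /eqP; lra.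
have H0 x y : photon m0 x y <-> space2 x y = time x y ^+ 2.
  by rewrite /photon hl c1 expr1n mul1r.
pose eB := fun _ : nat => h; pose eQ := fun _ : nat => (0 : Q).
have := proj1 (SPR _ light_speed1_form_closed eB eQ m0 h hm0 hh) (proj2 (holds_light_speed1 eB eQ m0) H0).
rewrite holds_light_speed1 => H x y.
by rewrite H /lightlike -interval_mnorm; split => e; lra.
Qed.

Section WorldviewMap.
Hypothesis hSR : SR IOb Ph W.
Variables (m k : B) (f : 'rV[Q]_d -> 'rV[Q]_d).
Hypotheses (hm : IOb m) (hk : IOb k) (f_spec : forall x, ev_eq W m x k (f x)).

Lemma ev_eq_self_inj h y y' : IOb h -> ev_eq W h y h y' -> y = y'.
Proof.
move=> hh he; apply/eqP/negPn/negP => /lightlike_separates [z [h1 h2]].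
have [p [b [hp hy hz]]] := proj2 (photon_lightlike hSR hh y z) h1.
by apply: h2; apply/(photon_lightlike hSR hh); exists p, b; split => //; apply/(he p).
Qed.

Lemma worldview_graph x y : ev_eq W m x k y <-> y = f x.
Proof.
split=> [he|->]; last exact: f_spec.
by apply: (ev_eq_self_inj hk) => b; rewrite -(he b); apply: f_spec.
Qed.

Lemma worldview_light x y : lightlike (f x) (f y) <-> lightlike x y.
Proof.
rewrite -(photon_lightlike hSR hk) -(photon_lightlike hSR hm).
by split=> -[p [b [hp h1 h2]]]; exists p, b; split => //; apply/(f_spec _ p).
Qed.

Lemma worldview_surj y : exists x, f x = y.
Proof.
have [x hx] : exists x, ev_eq W k y m x by case: hSR => _ _ E _ _; apply: E.
by exists x; symmetry; apply/worldview_graph => b; rewrite (hx b).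
Qed.

Lemma worldview_inj : injective f.
Proof.
move=> x x' e; apply: (ev_eq_self_inj hm) => b.
by rewrite (f_spec x b) e -(f_spec x' b).
Qed.

Lemma worldview_simul x y : time x y = 0 -> time (f x) (f y) = 0 ->
  space2 x y = space2 (f x) (f y).
Proof.
move: hSR => [_ _ _ _ [Sym _]] t1 t2.
exact: (Sym m k x y (f x) (f y) hm hk t1 t2 (f_spec x) (f_spec y)).
Qed.

End WorldviewMap.
End SpecialRelativity.
End Spacetime.

Unset Implicit Arguments. Set Strict Implicit. Set Printing Implicit Defensive.

Theorem corollary3p6 (d : nat) (hd : (3 <= d)%N) (Q : realFieldType) (B : Type)
  (IOb : B -> Prop) (Ph : B -> B -> Prop) (W : B -> B -> 'rV[Q]_d -> Prop) :
  SR IOb Ph W ->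
  forall m k : B, IOb m -> IOb k ->
  exists P : 'rV[Q]_d -> 'rV[Q]_d,
    poincare P /\ forall x y : 'rV[Q]_d, wview W m k x y <-> y = P x.
Proof.
move=> hSR m k hm hk.
have hf x : {y | ev_eq W m x k y}.
  by apply: constructive_indefinite_description; case: hSR => _ _ E _ _; apply: E.
pose f x := sval (hf x); have f_spec x : ev_eq W m x k (f x) := svalP (hf x).
exists f; split; last exact: (worldview_graph hd hSR hk f_spec).
apply: (cone_preserving_poincare hd).
- exact: (worldview_light hd hSR hm hk f_spec).
- exact: (worldview_surj hd hSR hm hk f_spec).
- exact: (worldview_inj hd hSR hm f_spec).
- exact: (worldview_simul hSR hm hk f_spec).
Qed.
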